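(* Let $\alpha,\beta,\mu\in\mathbb{R}\setminus\{0\}$ with $\Delta:=\alpha^2+\beta^2-2\mu^2>0$, let $x_1,x_2\in\mathbb{R}$, and let $B_\mu=B_{\alpha,\beta,\mu}(t,x;x_1,x_2)$ be the Gardner breather. Then for every fixed $t\in\mathbb{R}$, $B_\mu$ satisfies, as a function of $x$, the nonlinear stationary equation $$B_{\mu,4x}-2(\beta^2-\alpha^2)\big(B_{\mu,xx}+3\mu B_\mu^2+B_\mu^3\big)+(\alpha^2+\beta^2)^2B_\mu+5B_\mu B_{\mu,x}^2+5B_\mu^2B_{\mu,xx}+\tfrac32 B_\mu^5+5\mu B_{\mu,x}^2+10\mu B_\mu B_{\mu,xx}+10\mu^2B_\mu^3+\tfrac{15}{2}\mu B_\mu^4=0,$$ where subscripts $x$, $xx$, $4x$ denote spatial derivatives.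
   Context: Gardner breathers: for $\alpha,\beta,\mu\in\mathbb{R}\setminus\{0\}$ with $\Delta>0$ and $x_1,x_2\in\mathbb{R}$, set $\delta:=\alpha^2-3\beta^2$, $\gamma:=3\alpha^2-\beta^2$, $y_1:=x+\delta t+x_1$, $y_2:=x+\gamma t+x_2$, $$G_\mu(t,x):=\frac{\beta\sqrt{\alpha^2+\beta^2}}{\alpha\sqrt{\Delta}}\sin(\alpha y_1)-\frac{\sqrt2\,\mu\beta\, e^{\beta y_2}}{\Delta},\qquad F_\mu(t,x):=\cosh(\beta y_2)-\frac{\sqrt2\,\mu\beta\,[\alpha\cos(\alpha y_1)-\beta\sin(\alpha y_1)]}{\alpha\sqrt{\alpha^2+\beta^2}\sqrt{\Delta}},$$ and $B_{\alpha,\beta,\mu}(t,x;x_1,x_2):=2\sqrt2\,\partial_x[\arctan(G_\mu/F_\mu)]=2\sqrt2\,\frac{F_\mu\partial_xG_\mu-G_\mu\partial_xF_\mu}{F_\mu^2+G_\mu^2}$. It is a real smooth solution of the Gardner equation $w_t+(w_{xx}+3\mu w^2+w^3)_x=0$. *)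

From Stdlib Require Import Reals.
From Coquelicot Require Import Coquelicot.
Open Scope R_scope.

Definition gDelta (a b mu : R) : R := a ^ 2 + b ^ 2 - 2 * mu ^ 2.

Definition gG (a b mu x1 x2 t x : R) : R :=
  let y1 := x + (a ^ 2 - 3 * b ^ 2) * t + x1 in
  let y2 := x + (3 * a ^ 2 - b ^ 2) * t + x2 in
  b * sqrt (a ^ 2 + b ^ 2) / (a * sqrt (gDelta a b mu)) * sin (a * y1)
  - sqrt 2 * mu * b * exp (b * y2) / gDelta a b mu.

Definition gF (a b mu x1 x2 t x : R) : R :=
  let y1 := x + (a ^ 2 - 3 * b ^ 2) * t + x1 in
  let y2 := x + (3 * a ^ 2 - b ^ 2) * t + x2 in
  cosh (b * y2)
  - sqrt 2 * mu * b * (a * cos (a * y1) - b * sin (a * y1))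
    / (a * sqrt (a ^ 2 + b ^ 2) * sqrt (gDelta a b mu)).

Definition breather (a b mu x1 x2 t x : R) : R :=
  let F := gF a b mu x1 x2 t in
  let G := gG a b mu x1 x2 t in
  2 * sqrt 2 * (F x * Derive G x - G x * Derive F x) / (F x ^ 2 + G x ^ 2).

(** Write [theta = a (x + delta t + x1)] and [eta = b (x + gamma t + x2)].  Up to the
    constant factor [2 a sqrt Delta], [F_mu] and [G_mu] are linear combinations of
    [s = (a sin theta + b cos theta) / sqrt (a^2 + b^2)], [c = (a cos theta - b sin theta) /
    sqrt (a^2 + b^2)], [e = exp eta / sqrt Delta] and [1 / e], and this four-dimensional space
    is stable under [d/dx]: [s' = a c], [c' = - a s], [e' = b e].  Since
    [B = 2 sqrt 2 (F G' - G F') / (F^2 + G^2)], every derivative of [B] is a rational function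
    of [s, c, e, 1/e], and the stationary equation, multiplied by [(F^2 + G^2)^5], becomes a
    polynomial identity in [a, b, m = sqrt 2 mu, s, c, e, 1/e] which holds as soon as
    [e * (1/e) = s^2 + c^2].  It is homogeneous in [(s, c, e, 1/e)], so one may take [e = 1],
    and the remaining identity in [a, b, m, s, c] is checked by a verified polynomial
    normalizer.  The denominator never vanishes because
    [a e F - (a m e / b) G = a^2 ((s - m e)^2 + c^2 + (a^2 + b^2) e^2)]. *)

From Stdlib Require Import Reals Lra Lia ZArith List.
From Coquelicot Require Import Coquelicot.
Import ListNotations.
Open Scope R_scope.

(** * Jets of derivatives *)

Definition is_jet (n : nat) (h : nat -> R -> R) : Prop :=
  forall k x, (k < n)%nat -> is_derive (h k) x (h (S k) x).

Lemma is_jet_Derive n h k x : is_jet n h -> (k < n)%nat ->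
  Derive (fun y => h k y) x = h (S k) x.
Proof. intros H Hk; apply is_derive_unique, H, Hk. Qed.

Lemma is_jet_ex_derive n h k x : is_jet n h -> (k < n)%nat -> ex_derive (fun y => h k y) x.
Proof. intros H Hk; eexists; apply H, Hk. Qed.

Lemma Derive_n_is_jet n h k x : is_jet n h -> (k <= n)%nat ->
  Derive_n (h 0%nat) k x = h k x.
Proof.
  intros H; revert x; induction k as [|k IH]; intros x Hk; [reflexivity|].
  simpl; rewrite (Derive_ext _ (h k) x) by (intro y; apply IH; lia).
  apply is_derive_unique, H; lia.
Qed.

(** Derivatives of [n 0 / d 0] in terms of the jets [n] and [d]: Leibniz's rule for
    [q * d = n] solved for [q k].  Only orders up to 4 are defined. *)
Definition quotient_jet (n d : nat -> R) (k : nat) : R :=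
  let q0 := n 0%nat / d 0%nat in
  let q1 := (n 1%nat - q0 * d 1%nat) / d 0%nat in
  let q2 := (n 2%nat - 2 * q1 * d 1%nat - q0 * d 2%nat) / d 0%nat in
  let q3 := (n 3%nat - 3 * q2 * d 1%nat - 3 * q1 * d 2%nat - q0 * d 3%nat) / d 0%nat in
  let q4 := (n 4%nat - 4 * q3 * d 1%nat - 6 * q2 * d 2%nat - 4 * q1 * d 3%nat
             - q0 * d 4%nat) / d 0%nat in
  match k with
  | 0%nat => q0 | 1%nat => q1 | 2%nat => q2 | 3%nat => q3 | 4%nat => q4 | _ => 0
  end.

Lemma quotient_jet_is_jet (N D : nat -> R -> R) :
  is_jet 4 N -> is_jet 4 D -> (forall x, D 0%nat x <> 0) ->
  is_jet 4 (fun k y => quotient_jet (fun i => N i y) (fun i => D i y) k).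
Proof.
  intros HN HD HD0 k x Hk; pose proof (HD0 x).
  destruct k as [|[|[|[|k]]]]; [| | | | lia]; cbv [quotient_jet];
    (auto_derive;
      [ repeat split; auto; apply (is_jet_ex_derive 4); auto with arith
      | rewrite ?(is_jet_Derive 4 N _ x HN), ?(is_jet_Derive 4 D _ x HD) by lia; field; auto ]).
Qed.

Definition wronsk (f g : nat -> R) (j k : nat) : R := f j * g k - g j * f k.
Definition sumsq (f g : nat -> R) (j k : nat) : R := f j * f k + g j * g k.

Definition wronskian_jet (f g : nat -> R) (k : nat) : R :=
  match k with
  | 0%nat => wronsk f g 0 1
  | 1%nat => wronsk f g 0 2
  | 2%nat => wronsk f g 1 2 + wronsk f g 0 3
  | 3%nat => 2 * wronsk f g 1 3 + wronsk f g 0 4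
  | 4%nat => 2 * wronsk f g 2 3 + 3 * wronsk f g 1 4 + wronsk f g 0 5
  | _ => 0
  end.

Definition sumsq_jet (f g : nat -> R) (k : nat) : R :=
  match k with
  | 0%nat => sumsq f g 0 0
  | 1%nat => 2 * sumsq f g 0 1
  | 2%nat => 2 * (sumsq f g 1 1 + sumsq f g 0 2)
  | 3%nat => 2 * (3 * sumsq f g 1 2 + sumsq f g 0 3)
  | 4%nat => 2 * (3 * sumsq f g 2 2 + 4 * sumsq f g 1 3 + sumsq f g 0 4)
  | _ => 0
  end.

Section WronskianJet.

Variables F G : nat -> R -> R.
Hypotheses (F_jet : is_jet 5 F) (G_jet : is_jet 5 G).

Lemma wronskian_jet_is_jet :
  is_jet 4 (fun k y => wronskian_jet (fun i => F i y) (fun i => G i y) k).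
Proof.
  intros k x Hk; destruct k as [|[|[|[|k]]]]; [| | | | lia]; cbv [wronskian_jet wronsk];
    (auto_derive;
      [ repeat split; apply (is_jet_ex_derive 5); auto with arith
      | rewrite ?(is_jet_Derive 5 F _ x F_jet), ?(is_jet_Derive 5 G _ x G_jet) by lia; ring ]).
Qed.

Lemma sumsq_jet_is_jet :
  is_jet 4 (fun k y => sumsq_jet (fun i => F i y) (fun i => G i y) k).
Proof.
  intros k x Hk; destruct k as [|[|[|[|k]]]]; [| | | | lia]; cbv [sumsq_jet sumsq];
    (auto_derive;
      [ repeat split; apply (is_jet_ex_derive 5); auto with arith
      | rewrite ?(is_jet_Derive 5 F _ x F_jet), ?(is_jet_Derive 5 G _ x G_jet) by lia; ring ]).
Qed.

End WronskianJet.

(** Coordinates of a linear combination of four functions [s, c, e, ei] with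
    [s' = a c], [c' = - a s], [e' = b e], [ei' = - b ei]; [lc_deriv] is [d/dx] in them. *)
Record lincomb := { co_s : R; co_c : R; co_e : R; co_ei : R }.

Definition lc_eval (l : lincomb) (s c e ei : R) : R :=
  co_s l * s + co_c l * c + co_e l * e + co_ei l * ei.

Definition lc_deriv (a b : R) (l : lincomb) : lincomb :=
  {| co_s := - a * co_c l; co_c := a * co_s l; co_e := b * co_e l; co_ei := - b * co_ei l |}.

Definition lc_jet (a b : R) (l : lincomb) (s c e ei : R) (k : nat) : R :=
  lc_eval (Nat.iter k (lc_deriv a b) l) s c e ei.

Lemma lc_jet_is_jet (a b : R) (s c e ei : R -> R) (l : lincomb) (n : nat) :
  (forall x, is_derive s x (a * c x)) -> (forall x, is_derive c x (- a * s x)) ->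
  (forall x, is_derive e x (b * e x)) -> (forall x, is_derive ei x (- b * ei x)) ->
  is_jet n (fun k y => lc_jet a b l (s y) (c y) (e y) (ei y) k).
Proof.
  intros ds dc de dei k x _; unfold lc_jet.
  change (Nat.iter (S k) (lc_deriv a b) l) with (lc_deriv a b (Nat.iter k (lc_deriv a b) l)).
  generalize (Nat.iter k (lc_deriv a b) l); intros l'.
  assert (Ds : Derive (fun y => s y) x = a * c x) by apply is_derive_unique, ds.
  assert (Dc : Derive (fun y => c y) x = - a * s x) by apply is_derive_unique, dc.
  assert (De : Derive (fun y => e y) x = b * e x) by apply is_derive_unique, de.
  assert (Dei : Derive (fun y => ei y) x = - b * ei x) by apply is_derive_unique, dei.
  unfold lc_eval, lc_deriv; cbn [co_s co_c co_e co_ei]; auto_derive.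
  - repeat split; eexists; eauto.
  - rewrite Ds, Dc, De, Dei; ring.
Qed.

Lemma lc_jet_scale a b l s c e ei (r : R) k :
  lc_jet a b l (r * s) (r * c) (r * e) (r * ei) k = r * lc_jet a b l s c e ei k.
Proof. unfold lc_jet, lc_eval; ring. Qed.

Lemma wronskian_jet_scale (f g f' g' : nat -> R) (r : R) :
  (forall j, f j = r * f' j) -> (forall j, g j = r * g' j) ->
  forall k, wronskian_jet f g k = r ^ 2 * wronskian_jet f' g' k.
Proof.
  intros hf hg [|[|[|[|[|k]]]]]; cbv [wronskian_jet wronsk]; rewrite ?hf, ?hg; ring.
Qed.

Lemma sumsq_jet_scale (f g f' g' : nat -> R) (r : R) :
  (forall j, f j = r * f' j) -> (forall j, g j = r * g' j) ->
  forall k, sumsq_jet f g k = r ^ 2 * sumsq_jet f' g' k.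
Proof.
  intros hf hg [|[|[|[|[|k]]]]]; cbv [sumsq_jet sumsq]; rewrite ?hf, ?hg; ring.
Qed.

Lemma quotient_jet_scale (n d n' d' : nat -> R) (r : R) : r <> 0 -> d' 0%nat <> 0 ->
  (forall j, n j = r * n' j) -> (forall j, d j = r * d' j) ->
  forall k, quotient_jet n d k = quotient_jet n' d' k.
Proof.
  intros hr hd hn hdd [|[|[|[|[|k]]]]]; cbv [quotient_jet]; rewrite ?hn, ?hdd;
    [field; auto .. | reflexivity].
Qed.

(** * Polynomial identities by reflection *)

(** Monomials are exponent lists without trailing zeros, so equal monomials are equal lists. *)
Definition monom := list nat.
Definition poly := list (Z * monom).

Fixpoint monom_cmp (u v : monom) : comparison :=
  match u, v with
  | [], [] => Eq
  | [], _ => Lt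
  | _, [] => Gt
  | x :: u', y :: v' =>
      match Nat.compare x y with Eq => monom_cmp u' v' | r => r end
  end.

Fixpoint monom_mul (u v : monom) : monom :=
  match u, v with
  | [], _ => v
  | _, [] => u
  | x :: u', y :: v' => (x + y)%nat :: monom_mul u' v'
  end.

Fixpoint padd (p q : poly) : poly :=
  match p with
  | [] => q
  | (c1, u) :: p' =>
      (fix padd_p (q : poly) : poly :=
         match q with
         | [] => p
         | (c2, v) :: q' =>
             match monom_cmp u v with
             | Lt => (c1, u) :: padd p' q
             | Gt => (c2, v) :: padd_p q'
             | Eq => let c := (c1 + c2)%Z in
                     if Z.eqb c 0 then padd p' q' else (c, u) :: padd p' q'
             end
         end) q
  end.

Definition pscale (c : Z) (u : monom) (q : poly) : poly :=
  map (fun t => ((c * fst t)%Z, monom_mul u (snd t))) q.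

(** Partial products are merged pairwise: this keeps the kernel evaluation of large products fast. *)
Fixpoint merge_pairs (l : list poly) : list poly :=
  match l with
  | p1 :: p2 :: l' => padd p1 p2 :: merge_pairs l'
  | _ => l
  end.

Fixpoint merge_all (fuel : nat) (l : list poly) : poly :=
  match fuel with
  | O => fold_right padd [] l
  | S fuel' =>
      match l with
      | [] => []
      | [p] => p
      | _ => merge_all fuel' (merge_pairs l)
      end
  end.

Definition pmul (p q : poly) : poly :=
  merge_all (length p) (map (fun t => pscale (fst t) (snd t) q) p).

Definition popp (p : poly) : poly := map (fun t => ((- fst t)%Z, snd t)) p.

Fixpoint ppow (p : poly) (k : nat) : poly :=
  match k with
  | O => [(1%Z, [])]
  | S O => p
  | S k' => pmul p (ppow p k')
  end.

Fixpoint meval (u : monom) (vs : list R) : R :=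
  match u, vs with
  | x :: u', v :: vs' => v ^ x * meval u' vs'
  | _, _ => 1
  end.

Fixpoint peval (p : poly) (vs : list R) : R :=
  match p with
  | [] => 0
  | (c, u) :: p' => IZR c * meval u vs + peval p' vs
  end.

Lemma monom_cmp_eq u v : monom_cmp u v = Eq -> u = v.
Proof.
  revert v; induction u as [|x u IH]; intros [|y v]; simpl; try discriminate; auto.
  destruct (Nat.compare x y) eqn:Hxy; try discriminate.
  apply Nat.compare_eq in Hxy; intro; subst; f_equal; auto.
Qed.

Lemma meval_monom_mul u v vs : meval (monom_mul u v) vs = meval u vs * meval v vs.
Proof.
  revert v vs; induction u as [|x u IH]; intros [|y v] [|w vs]; simpl; try ring.
  rewrite IH, pow_add; ring.
Qed.

Lemma peval_padd p q vs : peval (padd p q) vs = peval p vs + peval q vs.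
Proof.
  revert q; induction p as [|[c1 u] p IH]; intros q; simpl; [ring|].
  induction q as [|[c2 v] q IHq]; simpl; [ring|].
  destruct (monom_cmp u v) eqn:Huv; simpl.
  - apply monom_cmp_eq in Huv; subst v.
    destruct (Z.eqb (c1 + c2) 0) eqn:Hc; simpl; rewrite IH.
    + apply Z.eqb_eq in Hc.
      replace (IZR c2) with (- IZR c1) by (rewrite <- opp_IZR; f_equal; lia); ring.
    + rewrite plus_IZR; ring.
  - rewrite IH; simpl; ring.
  - rewrite IHq; ring.
Qed.

Lemma peval_pscale c u q vs : peval (pscale c u q) vs = IZR c * meval u vs * peval q vs.
Proof.
  induction q as [|[c2 v] q IH]; simpl; [ring|].
  rewrite IH, mult_IZR, meval_monom_mul; ring.
Qed.

Fixpoint psum (l : list poly) (vs : list R) : R :=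
  match l with [] => 0 | p :: l' => peval p vs + psum l' vs end.

Lemma psum_merge_pairs l vs : psum (merge_pairs l) vs = psum l vs.
Proof.
  revert l; fix IH 1; intros [|p1 [|p2 l]]; simpl; try reflexivity.
  rewrite peval_padd, IH; ring.
Qed.

Lemma peval_merge_all fuel l vs : peval (merge_all fuel l) vs = psum l vs.
Proof.
  revert l; induction fuel as [|fuel IH]; intros l; simpl.
  - induction l as [|p l IHl]; simpl; [reflexivity|]. rewrite peval_padd, IHl; reflexivity.
  - destruct l as [|p [|p2 l]]; simpl; [reflexivity | ring |].
    rewrite IH; apply (psum_merge_pairs (p :: p2 :: l)).
Qed.

Lemma peval_pmul p q vs : peval (pmul p q) vs = peval p vs * peval q vs.
Proof.
  unfold pmul; rewrite peval_merge_all.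
  induction p as [|[c u] p IH]; simpl; [ring|].
  rewrite peval_pscale, IH; ring.
Qed.

Lemma peval_popp p vs : peval (popp p) vs = - peval p vs.
Proof.
  induction p as [|[c u] p IH]; simpl; [ring|].
  rewrite IH, opp_IZR; ring.
Qed.

Lemma peval_ppow p k vs : peval (ppow p k) vs = peval p vs ^ k.
Proof.
  induction k as [|[|k] IH]; [simpl; destruct vs; ring | simpl; ring |].
  change (ppow p (S (S k))) with (pmul p (ppow p (S k))).
  rewrite peval_pmul, IH; reflexivity.
Qed.

Inductive expr :=
  | EVar (i : nat)
  | EConst (z : Z)
  | EAdd (x y : expr)
  | ESub (x y : expr)
  | EMul (x y : expr)
  | EOpp (x : expr)
  | EPow (x : expr) (k : nat)
  | ELet (x body : expr).

Fixpoint denote (env : list R) (x : expr) : R :=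
  match x with
  | EVar i => nth i env 0
  | EConst z => IZR z
  | EAdd x y => denote env x + denote env y
  | ESub x y => denote env x - denote env y
  | EMul x y => denote env x * denote env y
  | EOpp x => - denote env x
  | EPow x k => denote env x ^ k
  | ELet x body => denote (denote env x :: env) body
  end.

Fixpoint expr_poly (penv : list poly) (x : expr) : poly :=
  match x with
  | EVar i => nth i penv []
  | EConst z => if Z.eqb z 0 then [] else [(z, [])]
  | EAdd x y => padd (expr_poly penv x) (expr_poly penv y)
  | ESub x y => padd (expr_poly penv x) (popp (expr_poly penv y))
  | EMul x y => pmul (expr_poly penv x) (expr_poly penv y)
  | EOpp x => popp (expr_poly penv x)
  | EPow x k => ppow (expr_poly penv x) k
  | ELet x body => expr_poly (expr_poly penv x :: penv) body
  end.

Lemma peval_expr_poly penv env vs x :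
  (forall i, peval (nth i penv []) vs = nth i env 0) ->
  peval (expr_poly penv x) vs = denote env x.
Proof.
  revert penv env; induction x; intros penv env Henv; simpl;
    rewrite ?peval_padd, ?peval_popp, ?peval_pmul, ?peval_ppow;
    try (erewrite IHx1 by eassumption; erewrite IHx2 by eassumption); try reflexivity.
  - apply Henv.
  - destruct (Z.eqb z 0) eqn:Hz; simpl.
    + apply Z.eqb_eq in Hz; subst; reflexivity.
    + destruct vs; ring.
  - erewrite IHx by eassumption; reflexivity.
  - erewrite IHx by eassumption; reflexivity.
  - apply IHx2; intros [|i]; simpl; auto.
Qed.

Definition var_monom (i : nat) : monom := repeat O i ++ [1%nat].

Lemma meval_var_monom i vs : (i < length vs)%nat -> meval (var_monom i) vs = nth i vs 0.
Proof.
  revert vs; induction i as [|i IH]; intros [|v vs] Hi; simpl in *; try lia.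
  - destruct vs; ring.
  - rewrite IH by lia; ring.
Qed.

Definition var_polys (n : nat) : list poly := map (fun i => [(1%Z, var_monom i)]) (seq 0 n).

Lemma denote_eq_0 vs x : expr_poly (var_polys (length vs)) x = [] -> denote vs x = 0.
Proof.
  intros H.
  rewrite <- (peval_expr_poly (var_polys (length vs)) vs vs), H; [reflexivity|].
  intros i; unfold var_polys; set (var := fun i => [(1%Z, var_monom i)]).
  destruct (Nat.lt_ge_cases i (length vs)) as [Hi|Hi].
  - rewrite (nth_indep _ _ (var 0%nat)) by (rewrite length_map, length_seq; lia).
    rewrite map_nth, seq_nth by lia; simpl; rewrite meval_var_monom by lia; ring.
  - rewrite !nth_overflow by (rewrite ?length_map, ?length_seq; lia); reflexivity.
Qed.

Ltac find_index x l :=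
  lazymatch l with
  | (x :: _)%list => constr:(O)
  | (_ :: ?l')%list => let i := find_index x l' in constr:(S i)
  end.

Ltac reify env t :=
  lazymatch t with
  | ?u + ?v => let ru := reify env u in let rv := reify env v in constr:(EAdd ru rv)
  | ?u - ?v => let ru := reify env u in let rv := reify env v in constr:(ESub ru rv)
  | ?u * ?v => let ru := reify env u in let rv := reify env v in constr:(EMul ru rv)
  | - ?u => let ru := reify env u in constr:(EOpp ru)
  | ?u ^ ?k => let ru := reify env u in constr:(EPow ru k)
  | IZR ?z => constr:(EConst z)
  | _ => let i := find_index t env in constr:(EVar i)
  end.

Ltac reify_lets defs env t :=
  lazymatch defs with
  | (?x :: ?defs')%list =>
      let v := eval unfold x in x in
      let rv := reify env v in
      let rt := reify_lets defs' (x :: env)%list t in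
      constr:(ELet rv rt)
  | nil => reify env t
  end.

(** [poly_zero defs env] proves [t = 0] for [t] polynomial in the variables [env] and in the
    local definitions [defs], listed in dependency order; each definition is expanded once. *)
Ltac poly_zero defs env :=
  lazymatch goal with
  | |- ?t = 0 =>
      let r := reify_lets defs env t in
      change (denote env r = 0); apply denote_eq_0; vm_compute; reflexivity
  end.

(** * The breather identity in the coordinates [s, c, e, 1/e] *)

(** [gardner_stationary_scaled] at [quotient_jet n d], multiplied by [D0 ^ 5]: [Pk] is
    [D0 ^ (k + 1)] times the [k]-th derivative of [N0 / D0].  The nesting in [D0] keeps the
    polynomials of [breather_cleared_stationary] small. *)
Definition cleared_stationary (a b m : R) (n d : nat -> R) : Prop :=
  let N0 := n 0%nat in let N1 := n 1%nat in let N2 := n 2%nat in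
  let N3 := n 3%nat in let N4 := n 4%nat in
  let D0 := d 0%nat in let D1 := d 1%nat in let D2 := d 2%nat in
  let D3 := d 3%nat in let D4 := d 4%nat in
  let P1 := N1 * D0 - N0 * D1 in
  let P2 := D0 * (N2 * D0 - N0 * D2) - 2 * P1 * D1 in
  let P3 := D0 * (D0 * (N3 * D0 - N0 * D3) - 3 * P1 * D2) - 3 * P2 * D1 in
  let P4 := D0 * (D0 * (D0 * (N4 * D0 - N0 * D4) - 4 * P1 * D3) - 6 * P2 * D2) - 4 * P3 * D1 in
  P4 + 40 * N0 * (P1 ^ 2 + N0 * P2) + 96 * N0 ^ 5
  + D0 * (10 * m * (P1 ^ 2 + 2 * N0 * (P2 + 6 * N0 ^ 3))
  + D0 * (- 2 * (b ^ 2 - a ^ 2) * (P2 + 8 * N0 ^ 3) + 40 * m ^ 2 * N0 ^ 3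
  + D0 * (- 12 * (b ^ 2 - a ^ 2) * m * N0 ^ 2 + D0 * (a ^ 2 + b ^ 2) ^ 2 * N0))) = 0.

(** The stationary equation for [w = B / (2 sqrt 2)], with [m = sqrt 2 mu]. *)
Definition gardner_stationary_scaled (a b m w0 w1 w2 w4 : R) : R :=
  w4 - 2 * (b ^ 2 - a ^ 2) * (w2 + 6 * m * w0 ^ 2 + 8 * w0 ^ 3) + (a ^ 2 + b ^ 2) ^ 2 * w0
  + 40 * w0 * w1 ^ 2 + 40 * w0 ^ 2 * w2 + 96 * w0 ^ 5
  + 10 * m * w1 ^ 2 + 20 * m * w0 * w2 + 40 * m ^ 2 * w0 ^ 3 + 120 * m * w0 ^ 4.

Lemma gardner_stationary_scaled_of_cleared (a b m : R) (n d : nat -> R) : d 0%nat <> 0 ->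
  cleared_stationary a b m n d ->
  let w := quotient_jet n d in
  gardner_stationary_scaled a b m (w 0%nat) (w 1%nat) (w 2%nat) (w 4%nat) = 0.
Proof.
  intros hd H w; cbv beta zeta delta [cleared_stationary] in H.
  match type of H with ?X = 0 =>
    transitivity (X / d 0%nat ^ 5); [|rewrite H; field; exact hd]
  end.
  unfold w, gardner_stationary_scaled, quotient_jet; cbv zeta; field; exact hd.
Qed.

(** [2 a sqrt Delta] times [F_mu] and [G_mu], with [m = sqrt 2 mu]; see [gF_eq] and [gG_eq]. *)
Definition breather_F (a b m : R) : lincomb :=
  {| co_s := 0; co_c := - 2 * m * b; co_e := a * (a ^ 2 + b ^ 2 - m ^ 2); co_ei := a |}.

Definition breather_G (a b m : R) : lincomb :=
  {| co_s := 2 * a * b; co_c := - 2 * b ^ 2; co_e := - 2 * a * m * b; co_ei := 0 |}.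

Lemma breather_cleared_stationary (a b m s c : R) :
  let f := lc_jet a b (breather_F a b m) s c 1 (s ^ 2 + c ^ 2) in
  let g := lc_jet a b (breather_G a b m) s c 1 (s ^ 2 + c ^ 2) in
  cleared_stationary a b m (wronskian_jet f g) (sumsq_jet f g).
Proof.
  intros f g; cbv beta delta [cleared_stationary].
  intros N0 N1 N2 N3 N4 D0 D1 D2 D3 D4 P1 P2 P3 P4.
  cbv beta iota zeta delta [f g wronskian_jet sumsq_jet wronsk sumsq lc_jet lc_eval lc_deriv
    breather_F breather_G Nat.iter nat_rect co_s co_c co_e co_ei]
    in N0, N1, N2, N3, N4, D0, D1, D2, D3, D4.
  poly_zero [N0; N1; N2; N3; N4; D0; D1; D2; D3; D4; P1; P2; P3; P4] [a; b; m; s; c].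
Qed.

Lemma breather_sumsq_neq0 (a b m s c e ei : R) :
  a <> 0 -> b <> 0 -> e <> 0 -> e * ei = s ^ 2 + c ^ 2 ->
  sumsq_jet (lc_jet a b (breather_F a b m) s c e ei)
            (lc_jet a b (breather_G a b m) s c e ei) 0 <> 0.
Proof.
  intros a_neq0 b_neq0 e_neq0 e_ei.
  cbv [sumsq_jet sumsq lc_jet Nat.iter nat_rect].
  set (F0 := lc_eval (breather_F a b m) s c e ei).
  set (G0 := lc_eval (breather_G a b m) s c e ei).
  assert (key : a * e * F0 - a * m * e / b * G0
                = a ^ 2 * ((s - m * e) ^ 2 + c ^ 2 + (a ^ 2 + b ^ 2) * e ^ 2)).
  { assert (ei_eq : ei = (s ^ 2 + c ^ 2) / e) by (rewrite <- e_ei; field; exact e_neq0).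
    unfold F0, G0, lc_eval; cbn; rewrite ei_eq; field; auto. }
  intro H0.
  assert (F0 = 0 /\ G0 = 0) as [-> ->] by (split; nra).
  assert (0 < a ^ 2 * ((s - m * e) ^ 2 + c ^ 2 + (a ^ 2 + b ^ 2) * e ^ 2)).
  { assert (0 < a ^ 2) by (apply pow2_gt_0, a_neq0).
    assert (0 < e ^ 2) by (apply pow2_gt_0, e_neq0).
    assert (0 <= (s - m * e) ^ 2) by apply pow2_ge_0.
    assert (0 <= c ^ 2) by apply pow2_ge_0.
    apply Rmult_lt_0_compat; nra. }
  lra.
Qed.

Lemma breather_stationary_scaled (a b m s c e ei : R) :
  a <> 0 -> b <> 0 -> e <> 0 -> e * ei = s ^ 2 + c ^ 2 ->
  let f := lc_jet a b (breather_F a b m) s c e ei in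
  let g := lc_jet a b (breather_G a b m) s c e ei in
  let w := quotient_jet (wronskian_jet f g) (sumsq_jet f g) in
  gardner_stationary_scaled a b m (w 0%nat) (w 1%nat) (w 2%nat) (w 4%nat) = 0.
Proof.
  intros a_neq0 b_neq0 e_neq0 e_ei f g w.
  set (f' := lc_jet a b (breather_F a b m) (s / e) (c / e) 1 ((s / e) ^ 2 + (c / e) ^ 2)).
  set (g' := lc_jet a b (breather_G a b m) (s / e) (c / e) 1 ((s / e) ^ 2 + (c / e) ^ 2)).
  assert (ei_eq : ei = e * ((s / e) ^ 2 + (c / e) ^ 2)).
  { apply (Rmult_eq_reg_l e); [rewrite e_ei; field |]; exact e_neq0. }
  assert (rescale : forall l k, lc_jet a b l s c e ei k
            = e * lc_jet a b l (s / e) (c / e) 1 ((s / e) ^ 2 + (c / e) ^ 2) k).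
  { intros l k; rewrite <- lc_jet_scale, <- ei_eq.
    f_equal; [field; exact e_neq0 | field; exact e_neq0 | ring]. }
  assert (hD' : sumsq_jet f' g' 0 <> 0)
    by (apply breather_sumsq_neq0; [exact a_neq0 | exact b_neq0 | lra | ring]).
  assert (hw : forall k, w k = quotient_jet (wronskian_jet f' g') (sumsq_jet f' g') k).
  { apply (quotient_jet_scale _ _ _ _ (e ^ 2)); [apply pow_nonzero, e_neq0 | exact hD' | |];
      [apply wronskian_jet_scale | apply sumsq_jet_scale]; intro; apply rescale. }
  rewrite !hw.
  apply gardner_stationary_scaled_of_cleared; [exact hD' | apply breather_cleared_stationary].
Qed.

Definition gardner_stationary (a b mu u0 u1 u2 u4 : R) : R :=
  u4 - 2 * (b ^ 2 - a ^ 2) * (u2 + 3 * mu * u0 ^ 2 + u0 ^ 3)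
  + (a ^ 2 + b ^ 2) ^ 2 * u0 + 5 * u0 * u1 ^ 2 + 5 * u0 ^ 2 * u2
  + 3 / 2 * u0 ^ 5 + 5 * mu * u1 ^ 2 + 10 * mu * u0 * u2
  + 10 * mu ^ 2 * u0 ^ 3 + 15 / 2 * mu * u0 ^ 4.

Lemma gardner_stationary_rescale (a b mu r w0 w1 w2 w4 : R) : r * r = 2 ->
  gardner_stationary a b mu (2 * r * w0) (2 * r * w1) (2 * r * w2) (2 * r * w4)
  = 2 * r * gardner_stationary_scaled a b (r * mu) w0 w1 w2 w4.
Proof.
  intros hr.
  assert (r2 : r ^ 2 = 2) by (rewrite <- hr; ring).
  assert (r3 : r ^ 3 = 2 * r) by (rewrite <- r2; ring).
  assert (r4 : r ^ 4 = 4) by (replace (r ^ 4) with (r ^ 2 * r ^ 2) by ring; rewrite r2; ring).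
  assert (r5 : r ^ 5 = 4 * r) by (rewrite <- r4; ring).
  unfold gardner_stationary, gardner_stationary_scaled.
  ring_simplify; rewrite r5, r4, r3, r2; field.
Qed.

(** * The breather as a function of [x] *)

Section ConcreteBreather.

Variables a b mu x1 x2 t : R.
Hypotheses (a_neq0 : a <> 0) (b_neq0 : b <> 0) (Delta_pos : gDelta a b mu > 0).

Let r1 := sqrt (a ^ 2 + b ^ 2).
Let r2 := sqrt (gDelta a b mu).
Let m := sqrt 2 * mu.
Let theta (y : R) := a * (y + (a ^ 2 - 3 * b ^ 2) * t + x1).
Let growth (y : R) := b * (y + (3 * a ^ 2 - b ^ 2) * t + x2).
Let s (y : R) := (a * sin (theta y) + b * cos (theta y)) / r1.
Let c (y : R) := (a * cos (theta y) - b * sin (theta y)) / r1.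
Let e (y : R) := exp (growth y) / r2.
Let ei (y : R) := / e y.

Lemma r1_sq : r1 * r1 = a ^ 2 + b ^ 2.
Proof. apply sqrt_sqrt; nra. Qed.

Lemma r2_sq : r2 * r2 = gDelta a b mu.
Proof. apply sqrt_sqrt; lra. Qed.

Lemma r1_pos : 0 < r1.
Proof. apply sqrt_lt_R0; assert (0 < a ^ 2) by (apply pow2_gt_0, a_neq0); nra. Qed.

Lemma r2_pos : 0 < r2.
Proof. apply sqrt_lt_R0, Delta_pos. Qed.

Lemma e_pos y : 0 < e y.
Proof. apply Rdiv_lt_0_compat; [apply exp_pos | apply r2_pos]. Qed.

Lemma theta_deriv y : is_derive theta y a.
Proof. unfold theta; auto_derive; [easy | ring]. Qed.

Lemma growth_deriv y : is_derive growth y b.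
Proof. unfold growth; auto_derive; [easy | ring]. Qed.

Lemma s_deriv y : is_derive s y (a * c y).
Proof.
  pose proof r1_pos; unfold s, c; auto_derive.
  - repeat split; eexists; apply theta_deriv.
  - rewrite (is_derive_unique (fun z : R => theta z) y a) by apply theta_deriv; field; lra.
Qed.

Lemma c_deriv y : is_derive c y (- a * s y).
Proof.
  pose proof r1_pos; unfold s, c; auto_derive.
  - repeat split; eexists; apply theta_deriv.
  - rewrite (is_derive_unique (fun z : R => theta z) y a) by apply theta_deriv; field; lra.
Qed.

Lemma e_deriv y : is_derive e y (b * e y).
Proof.
  pose proof r2_pos; unfold e; auto_derive.
  - repeat split; eexists; apply growth_deriv.
  - rewrite (is_derive_unique (fun z : R => growth z) y b) by apply growth_deriv; field; lra.
Qed.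

Lemma ei_deriv y : is_derive ei y (- b * ei y).
Proof.
  pose proof (e_pos y); unfold ei; auto_derive.
  - repeat split; [eexists; apply e_deriv | lra].
  - rewrite (is_derive_unique (fun z : R => e z) y (b * e y)) by apply e_deriv; field; lra.
Qed.

Lemma s_sq_c_sq y : s y ^ 2 + c y ^ 2 = 1.
Proof.
  pose proof r1_pos.
  assert (pythagoras : sin (theta y) ^ 2 + cos (theta y) ^ 2 = 1)
    by (rewrite <- (sin2_cos2 (theta y)); unfold Rsqr; ring).
  transitivity ((a ^ 2 + b ^ 2) * (sin (theta y) ^ 2 + cos (theta y) ^ 2) / (r1 * r1)).
  - unfold s, c; field; lra.
  - rewrite pythagoras, r1_sq; field; rewrite <- r1_sq; nra.
Qed.

Let F (k : nat) (y : R) := lc_jet a b (breather_F a b m) (s y) (c y) (e y) (ei y) k.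
Let G (k : nat) (y : R) := lc_jet a b (breather_G a b m) (s y) (c y) (e y) (ei y) k.

Lemma F_jet n : is_jet n F.
Proof. exact (lc_jet_is_jet a b s c e ei _ n s_deriv c_deriv e_deriv ei_deriv). Qed.

Lemma G_jet n : is_jet n G.
Proof. exact (lc_jet_is_jet a b s c e ei _ n s_deriv c_deriv e_deriv ei_deriv). Qed.

Lemma gF_eq y : gF a b mu x1 x2 t y = F 0 y / (2 * a * r2).
Proof.
  pose proof (e_pos y); pose proof r1_pos; pose proof r2_pos.
  assert (kappa : a ^ 2 + b ^ 2 - m ^ 2 = r2 * r2).
  { rewrite r2_sq; unfold m, gDelta; rewrite Rpow_mult_distr, pow2_sqrt by lra; ring. }
  cbv beta iota delta [F lc_jet lc_eval breather_F Nat.iter nat_rect co_s co_c co_e co_ei].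
  rewrite kappa.
  unfold gF, cosh, ei, e, c, theta, growth, m, r1, r2; cbv zeta.
  rewrite exp_Ropp.
  field; repeat split; try exact a_neq0; apply Rgt_not_eq.
  - apply r2_pos.
  - apply exp_pos.
  - apply r1_pos.
Qed.

Lemma gG_eq y : gG a b mu x1 x2 t y = G 0 y / (2 * a * r2).
Proof.
  pose proof r1_pos; pose proof r2_pos.
  assert (rotation : a * s y - b * c y = r1 * sin (theta y)).
  { transitivity ((a ^ 2 + b ^ 2) * sin (theta y) / r1).
    - unfold s, c; field; lra.
    - rewrite <- r1_sq; field; lra. }
  transitivity ((2 * b * (a * s y - b * c y) - 2 * a * m * b * e y) / (2 * a * r2)).
  - rewrite rotation; unfold gG, e, theta, growth, m; cbv zeta.
    fold r1 r2; rewrite <- r2_sq.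
    field; split; [lra | exact a_neq0].
  - cbv beta iota delta [G lc_jet lc_eval breather_G Nat.iter nat_rect co_s co_c co_e co_ei].
    field; split; [lra | exact a_neq0].
Qed.

Lemma Derive_gF y : Derive (gF a b mu x1 x2 t) y = F 1 y / (2 * a * r2).
Proof.
  rewrite (Derive_ext _ (fun z => / (2 * a * r2) * F 0%nat z) y)
    by (intro; rewrite gF_eq; unfold Rdiv; ring).
  rewrite Derive_scal, (is_derive_unique _ _ _ (F_jet 1 0%nat y ltac:(lia))); unfold Rdiv; ring.
Qed.

Lemma Derive_gG y : Derive (gG a b mu x1 x2 t) y = G 1 y / (2 * a * r2).
Proof.
  rewrite (Derive_ext _ (fun z => / (2 * a * r2) * G 0%nat z) y)
    by (intro; rewrite gG_eq; unfold Rdiv; ring).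
  rewrite Derive_scal, (is_derive_unique _ _ _ (G_jet 1 0%nat y ltac:(lia))); unfold Rdiv; ring.
Qed.

Lemma sumsq_FG_neq0 y : sumsq_jet (fun i => F i y) (fun i => G i y) 0 <> 0.
Proof.
  pose proof (e_pos y).
  apply breather_sumsq_neq0; auto; [lra|].
  unfold ei; rewrite s_sq_c_sq; field; lra.
Qed.

Let W (k : nat) (y : R) :=
  quotient_jet (wronskian_jet (fun i => F i y) (fun i => G i y))
               (sumsq_jet (fun i => F i y) (fun i => G i y)) k.

Lemma breather_eq y : breather a b mu x1 x2 t y = 2 * sqrt 2 * W 0 y.
Proof.
  pose proof r2_pos; pose proof (sumsq_FG_neq0 y).
  unfold breather; cbv zeta.
  rewrite Derive_gF, Derive_gG, gF_eq, gG_eq.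
  unfold W, quotient_jet, wronskian_jet, sumsq_jet, wronsk, sumsq in *; cbv zeta.
  field; repeat split; auto; lra.
Qed.

Lemma Derive_n_breather k y : (k <= 4)%nat ->
  Derive_n (breather a b mu x1 x2 t) k y = 2 * sqrt 2 * W k y.
Proof.
  intros Hk.
  rewrite (Derive_n_ext _ (fun z => 2 * sqrt 2 * W 0 z)) by apply breather_eq.
  rewrite Derive_n_scal_l; f_equal.
  apply (Derive_n_is_jet 4 W); [|exact Hk].
  apply quotient_jet_is_jet;
    [apply wronskian_jet_is_jet | apply sumsq_jet_is_jet | apply sumsq_FG_neq0];
    apply F_jet || apply G_jet.
Qed.

Lemma breather_W_identity y :
  gardner_stationary_scaled a b m (W 0 y) (W 1 y) (W 2 y) (W 4 y) = 0.
Proof.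
  pose proof (e_pos y).
  apply breather_stationary_scaled; auto; [lra|].
  unfold ei; rewrite s_sq_c_sq; field; lra.
Qed.

End ConcreteBreather.

Theorem theorem3p6 (a b mu x1 x2 : R) :
  a <> 0 -> b <> 0 -> mu <> 0 -> gDelta a b mu > 0 ->
  forall t x : R,
    let B := breather a b mu x1 x2 t in
    let B0 := B x in
    let B1 := Derive_n B 1 x in
    let B2 := Derive_n B 2 x in
    let B4 := Derive_n B 4 x in
    B4 - 2 * (b ^ 2 - a ^ 2) * (B2 + 3 * mu * B0 ^ 2 + B0 ^ 3)
    + (a ^ 2 + b ^ 2) ^ 2 * B0 + 5 * B0 * B1 ^ 2 + 5 * B0 ^ 2 * B2
    + 3 / 2 * B0 ^ 5 + 5 * mu * B1 ^ 2 + 10 * mu * B0 * B2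
    + 10 * mu ^ 2 * B0 ^ 3 + 15 / 2 * mu * B0 ^ 4 = 0.
Proof.
  intros ha hb _ hD t x B.
  change (gardner_stationary a b mu (Derive_n B 0 x) (Derive_n B 1 x) (Derive_n B 2 x)
            (Derive_n B 4 x) = 0).
  unfold B; rewrite !(Derive_n_breather a b mu x1 x2 t ha hb hD) by lia.
  rewrite gardner_stationary_rescale by (apply sqrt_sqrt; lra).
  rewrite (breather_W_identity a b mu x1 x2 t ha hb hD); ring.
Qed.
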